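(* Let $D$ be a finite directed graph (parallel directed edges allowed, no loops) with nonempty vertex set $V$, in which every pair of adjacent vertices is joined by at least two directed edges (not necessarily in the same direction). Let $w:V\to\mathbb{N}^+$, and write $W=w[V]$ and $K=\alpha_w(D)$. Then $$\sum_{xy\in E(D)} w(x)\ \ge\ \frac{W^2}{K}-W,$$ where the sum runs over all directed edges $xy$ (directed from $x$ to $y$), counted with multiplicity.
   Context: For a function $f$ on a set $T$, $f[T]=\sum_{t\in T}f(t)$. Two vertices are adjacent if there is at least one directed edge between them (in either direction). $\alpha_w(D)$ is the maximum of $w[I]$ over all sets $I\subseteq V$ of pairwise non-adjacent vertices. *)

From mathcomp Require Import all_boot all_order all_algebra.
Set Implicit Arguments. Unset Strict Implicit. Unset Printing Implicit Defensive.

(* A finite directed multigraph on vertex type V is given by its edge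
   multiplicity function  m : V -> V -> nat,  m x y = number of directed
   edges from x to y.  Loopless means m x x = 0. *)

Definition loopless (V : finType) (m : V -> V -> nat) : Prop :=
  forall x : V, m x x = 0%N.

Definition adjacent (V : finType) (m : V -> V -> nat) (x y : V) : bool :=
  (0 < m x y + m y x)%N.

Definition stable (V : finType) (m : V -> V -> nat) (I : {set V}) : bool :=
  [forall x in I, forall y in I, ~~ adjacent m x y].

Definition wsum (V : finType) (w : V -> nat) (T : {set V}) : nat :=
  (\sum_(t in T) w t)%N.

Definition alpha_w (V : finType) (m : V -> V -> nat) (w : V -> nat) : nat :=
  (\max_(I : {set V} | stable m I) wsum w I)%N.

From mathcomp Require Import all_boot all_order all_algebra.
From mathcomp Require Import zify.
Import GRing.Theory Num.Theory.
Set Implicit Arguments. Unset Strict Implicit.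

(* Colour the vertices greedily in order of non-increasing
   weight, each vertex receiving the least colour absent among its already
   coloured neighbours.  The colouring c is proper, and a vertex x of colour
   c x has, for every k < c x, a neighbour y of colour k with w x <= w y.
   (A) Each colour class is stable, so its weight is at most K; splitting
       W^2 = \sum_{x,y} w x w y according to c y = c x or c y < c x or
       c y > c x gives  W^2 <= K W + 2 K C  with  C = \sum_x w x c x.
   (B) The c x heavier neighbours of x of smaller colour are each joined to
       x by at least two edges, whence  2 C <= \sum_{xy in E} w x.
   Hence W^2 <= K (W + \sum_{xy in E} w x), which is the theorem. *)

Lemma sum_pairs_by_rank (V : finType) (c : V -> nat) (F : V -> V -> nat) :
  \sum_x \sum_y F x y =
    \sum_x \sum_(y | c y == c x) F x y
  + \sum_x \sum_(y | c y < c x) (F x y + F y x).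
Proof.
have swap : \sum_x \sum_(y | c y < c x) F y x = \sum_x \sum_(y | c x < c y) F x y.
  rewrite (eq_bigr (fun x => \sum_y if c y < c x then F y x else 0));
    last by move=> x _; rewrite big_mkcond.
  rewrite exchange_big /=; apply: eq_bigr => x _; exact: esym (big_mkcond _ _).
rewrite [X in _ = _ + X](eq_bigr
    (fun x => \sum_(y | c y < c x) F x y + \sum_(y | c y < c x) F y x));
  last by move=> x _; rewrite big_split.
rewrite big_split /= swap addnA -!big_split /=; apply: eq_bigr => x _.
rewrite [\sum_(y | c y == c x) _]big_mkcond [\sum_(y | c y < c x) _]big_mkcond.
rewrite [\sum_(y | c x < c y) _]big_mkcond -!big_split /=; apply: eq_bigr => y _.
by case: ltngtP; rewrite ?addn0 ?add0n.
Qed.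

Lemma exists_nat_notin (s : seq nat) : exists k, k \notin s.
Proof.
have : ~~ all (mem s) (iota 0 (size s).+1).
  apply/negP => /allP/(uniq_leq_size (iota_uniq 0 _)).
  by rewrite size_iota ltnn.
by case/allPn => k _ hk; exists k.
Qed.

Section GreedyColouring.

Variables (V : finType) (m : V -> V -> nat) (w : V -> nat).
Hypothesis hloop : loopless m.

Lemma adjacent_sym (x y : V) : adjacent m x y = adjacent m y x.
Proof. by rewrite /adjacent addnC. Qed.

Lemma adjacent_irrefl (x : V) : adjacent m x x = false.
Proof. by rewrite /adjacent hloop. Qed.

Definition proper_on (U : {set V}) (c : V -> nat) : Prop :=
  forall x y, x \in U -> y \in U -> adjacent m x y -> c x != c y.

Definition greedy_on (U : {set V}) (c : V -> nat) : Prop :=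
  forall x, x \in U -> forall k, k < c x ->
    exists2 y, y \in U & [&& adjacent m x y, c y == k & w x <= w y].

(* Greedy colouring of U: colour U minus a lightest vertex x by induction,
   then give x the least colour missing among its neighbours. *)
Lemma greedy_colouring_on (U : {set V}) :
  exists c, proper_on U c /\ greedy_on U c.
Proof.
move hcard: #|U| => n; elim: n U hcard => [|n IH] U hU.
  by exists (fun _ => 0); move/cards0_eq: hU => ->; split=> x; rewrite in_set0.
have [x0 hx0] : exists x0, x0 \in U by apply/card_gt0P; rewrite hU.
case: (arg_minnP w hx0) => x hx hxmin; have hxU : x \in U := hx.
have [c' [c'_proper c'_greedy]] : exists c, proper_on (U :\ x) c /\ greedy_on (U :\ x) c.
  by apply: IH; move: hU; rewrite (cardsD1 x U) hxU add1n => -[].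
pose used := [seq c' y | y <- enum V & (y \in U :\ x) && adjacent m x y].
have [k k_fresh k_least] := ex_minnP (exists_nat_notin used).
have used_nbr y : y \in U :\ x -> adjacent m x y -> c' y \in used.
  by move=> hy hxy; apply: map_f; rewrite mem_filter mem_enum hy hxy.
exists (fun y => if y == x then k else c' y); split.
- move=> a b ha hb hab.
  case: (eqVneq a x) => [ea|nea]; case: (eqVneq b x) => [eb|neb].
  + by move: hab; rewrite ea eb adjacent_irrefl.
  + apply: contraNneq k_fresh => ->; apply: used_nbr; last by rewrite -ea.
    by rewrite in_setD1 neb.
  + apply: contraNneq k_fresh => <-; apply: used_nbr; last by rewrite -eb adjacent_sym.
    by rewrite in_setD1 nea.
  + by apply: c'_proper; rewrite // in_setD1 ?nea ?neb.
- move=> a ha j; case: (eqVneq a x) => [->|nea] hj.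
  + have : j \in used by apply: contraTT hj => /k_least; rewrite leqNgt.
    case/mapP => y; rewrite mem_filter mem_enum andbT in_setD1.
    move=> /andP[/andP[nyx hyU] hxy] ->.
    by exists y; rewrite // hxy (negbTE nyx) eqxx hxmin.
  + have ha' : a \in U :\ x by rewrite in_setD1 nea.
    case: (c'_greedy a ha' j hj) => y; rewrite in_setD1 => /andP[nyx hyU] hy.
    by exists y; rewrite // (negbTE nyx).
Qed.

Lemma greedy_colouring :
  exists c : V -> nat,
    (forall x y, adjacent m x y -> c x != c y) /\
    (forall x k, k < c x -> exists y, [&& adjacent m x y, c y == k & w x <= w y]).
Proof.
have [c [c_proper c_greedy]] := greedy_colouring_on [set: V].
exists c; split=> [x y|x k hk]; first exact: c_proper.
by have [y _ hy] := c_greedy x (in_setT x) k hk; exists y.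
Qed.

End GreedyColouring.

Section ColourBounds.

Variables (V : finType) (m : V -> V -> nat) (w : V -> nat) (c : V -> nat).
Hypothesis c_proper : forall x y, adjacent m x y -> c x != c y.

(* A colour class is stable, so its weight is at most alpha_w. *)
Lemma colour_class_le k : \sum_(y | c y == k) w y <= alpha_w m w.
Proof.
have class_stable : stable m [set y | c y == k].
  apply/forallP => x; apply/implyP; rewrite inE => /eqP hx.
  apply/forallP => y; apply/implyP; rewrite inE => /eqP hy.
  by apply/negP => /c_proper; rewrite hx hy eqxx.
apply: leq_trans (leq_bigmax_cond _ class_stable).
by apply/eq_leq/eq_bigl => y; rewrite inE.
Qed.

Lemma low_colours_le n : \sum_(y | c y < n) w y <= n * alpha_w m w.
Proof.
elim: n => [|n IH]; first by rewrite big_pred0.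
rewrite (bigID (fun y => c y < n)) /= mulSnr leq_add //.
  by rewrite (eq_bigl (fun y => c y < n)) // => y; case: (ltnP (c y) n); rewrite ?andbF ?andbT // => /leqW ->.
rewrite (eq_bigl (fun y => c y == n)); first exact: colour_class_le.
by move=> y; rewrite ltnS -leqNgt; case: ltngtP.
Qed.

Lemma weight_square_le :
  (\sum_x w x) * (\sum_x w x) <=
    alpha_w m w * (\sum_x w x) + 2 * (alpha_w m w * \sum_x w x * c x).
Proof.
set K := alpha_w m w.
have -> : (\sum_x w x) * (\sum_x w x) = \sum_x \sum_y w x * w y.
  by rewrite big_distrl; apply: eq_bigr => x _; rewrite big_distrr.
rewrite (sum_pairs_by_rank c); apply: leq_add.
  rewrite mulnC big_distrl; apply: leq_sum => x _.
  by rewrite -big_distrr leq_mul2l colour_class_le orbT.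
rewrite mulnA big_distrr /=; apply: leq_sum => x _.
rewrite (eq_bigr (fun y => 2 * (w x * w y))) => [|y _]; last first.
  by rewrite [w y * _]mulnC addnn -mul2n.
rewrite -!big_distrr /= -mulnA leq_mul2l mulnCA leq_mul2l [K * _]mulnC.
by rewrite low_colours_le !orbT.
Qed.

End ColourBounds.

Section EdgeBound.

Variables (V : finType) (m : V -> V -> nat) (w : V -> nat) (c : V -> nat).
Hypothesis c_greedy :
  forall x k, k < c x -> exists y, [&& adjacent m x y, c y == k & w x <= w y].
Hypothesis hdouble : forall x y, adjacent m x y -> 2 <= m x y + m y x.

Definition heavy_low_nbrs (x : V) (n : nat) : {set V} :=
  [set y | [&& adjacent m x y, c y < n & w x <= w y]].

Lemma heavy_low_nbrs_card x n : n <= c x -> n <= #|heavy_low_nbrs x n|.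
Proof.
elim: n => [|n IH] hn //.
have [y /and3P[hxy /eqP hcy hwy]] := c_greedy hn.
apply: leq_ltn_trans (IH (ltnW hn)) (proper_card _); apply/properP; split.
  by apply/subsetP => z; rewrite !inE => /and3P[-> /leqW ->].
by exists y; rewrite !inE ?hxy ?hwy hcy ?ltnn ?leqnn ?andbF.
Qed.

(* Each such neighbour contributes at least 2 w x to the edges between
   it and x, weighted by their tails. *)
Lemma vertex_potential_le x :
  2 * (w x * c x) <= \sum_(y | c y < c x) (m x y * w x + m y x * w y).
Proof.
apply: (@leq_trans (\sum_(y in heavy_low_nbrs x (c x)) 2 * w x)).
  rewrite sum_nat_const mulnA [X in _ <= X]mulnC leq_mul2l.
  by rewrite heavy_low_nbrs_card ?orbT.
rewrite [X in _ <= X](bigID (mem (heavy_low_nbrs x (c x)))) /=.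
apply: leq_trans (leq_addr _ _).
rewrite [X in _ <= X](eq_bigl (mem (heavy_low_nbrs x (c x)))); last first.
  by move=> y; rewrite /= inE; case: (c y < c x); rewrite ?andbF.
apply: leq_sum => y; rewrite inE => /and3P[/hdouble hxy _ hwy]; nia.
Qed.

Lemma potential_le_edge_weight :
  2 * (\sum_x w x * c x) <= \sum_x \sum_y m x y * w x.
Proof.
rewrite (sum_pairs_by_rank c (fun x y => m x y * w x)) big_distrr /=.
by apply: leq_trans (leq_addl _ _); apply: leq_sum => x _; exact: vertex_potential_le.
Qed.

End EdgeBound.

(* The theorem cleared of denominators:  W^2 <= K (W + \sum_{xy in E} w x). *)
Lemma weight_square_le_alpha (V : finType) (m : V -> V -> nat) (w : V -> nat) :
  loopless m -> (forall x y, adjacent m x y -> 2 <= m x y + m y x) ->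
  (\sum_x w x) * (\sum_x w x) <=
    alpha_w m w * (\sum_x w x + \sum_x \sum_y m x y * w x).
Proof.
move=> hloop hdouble.
have [c [c_proper c_greedy]] := greedy_colouring w hloop.
apply: leq_trans (weight_square_le w c_proper) _.
by rewrite mulnDr leq_add2l mulnCA leq_mul2l potential_le_edge_weight ?orbT.
Qed.

Lemma alpha_w_gt0 (V : finType) (m : V -> V -> nat) (w : V -> nat) :
  0 < #|V| -> loopless m -> (forall x, 0 < w x) -> 0 < alpha_w m w.
Proof.
move=> /card_gt0P[x0 _] hloop hw.
have single_stable : stable m [set x0].
  apply/forallP => x; apply/implyP; rewrite inE => /eqP ->.
  by apply/forallP => y; apply/implyP; rewrite inE => /eqP ->; rewrite adjacent_irrefl.
by apply: leq_trans (leq_bigmax_cond _ single_stable); rewrite /wsum big_set1.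
Qed.

Local Open Scope ring_scope.

Theorem theorem3p2 (V : finType) (m : V -> V -> nat) (w : V -> nat)
  (hV : (0 < #|V|)%N)
  (hloop : loopless m)
  (hdouble : forall x y : V, adjacent m x y -> (2 <= m x y + m y x)%N)
  (hw : forall x : V, (0 < w x)%N) :
  let W := wsum w [set: V] in
  let K := alpha_w m w in
  (W%:R ^+ 2) / K%:R - W%:R
    <= ((\sum_(x : V) \sum_(y : V) m x y * w x)%N)%:R :> rat.
Proof.
rewrite /= lerBlDr ler_pdivrMr ?ltr0n ?alpha_w_gt0 //.
rewrite -natrX -natrD -natrM ler_nat -mulnn mulnC addnC.
have -> : wsum w [set: V] = (\sum_x w x)%N by apply: eq_bigl => x; rewrite in_setT.
exact: weight_square_le_alpha.
Qed.
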